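(* (i) Let $f\colon M^{12}\to\mathbb{S}^{13}$ be the minimal Cartan isoparametric hypersurface with $g=3$ distinct principal curvatures, each of multiplicity $4$. Then $f$ satisfies, for every unit tangent vector $X$, $\mathrm{Ric}_M(X)\geq b(12,k,H)$ only for integers $2\leq k\leq 3$; for $k=3$ the inequality holds with equality (attained for some unit vectors), $\lambda(12,3,0)=\sqrt3$ is a principal curvature of multiplicity $4$, and the second fundamental form has the following structure: at every point there is a Dupin principal normal $\eta$ of multiplicity $4$ with $\|\eta\|=\lambda(12,3,0)$ and $\mathrm{Ric}_M(X)=b(12,3,0)$ for every unit $X\in E_\eta$. (ii) Let $f\colon M^{24}\to\mathbb{S}^{25}$ be the minimal Cartan isoparametric hypersurface with $g=3$ distinct principal curvatures, each of multiplicity $8$. Then $f$ satisfies $\mathrm{Ric}_M\geq b(24,k,H)$ only for integers $2\leq k\leq 6$; for $k=6$ with equality, $\lambda(24,6,0)=\sqrt3$ is a principal curvature of multiplicity $8$, and at every point there is a Dupin principal normal $\eta$ of multiplicity $8$ with $\|\eta\|=\lambda(24,6,0)$ and $\mathrm{Ric}_M(X)=b(24,6,0)$ for every unit $X\in E_\eta$.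
   Context: An isoparametric hypersurface of the unit sphere with $g=3$ (Cartan hypersurface) has principal curvatures $\cot\theta,\ \cot(\theta+\pi/3),\ \cot(\theta+2\pi/3)$ for some $\theta\in(0,\pi/2)$, all with the same multiplicity; the minimal one in the family has principal curvatures $\sqrt3,0,-\sqrt3$. Notation: $b(n,k,H)=\frac{n(k-1)}{k}+\frac{n(k-1)H}{2k^2}\big(nH+\sqrt{n^2H^2+4k(n-k)}\big)$, $\lambda(n,k,H)=\frac{1}{2k}\big(nH+\sqrt{n^2H^2+4k(n-k)}\big)$, $H$ the length of the normalized mean curvature vector, $\mathrm{Ric}_M(X)$ the non-normalized Ricci curvature in the unit direction $X$. A Dupin principal normal $\eta$ at $x$ is a normal vector for which $E_\eta(x)=\{X:\alpha_f(X,Y)=\langle X,Y\rangle\eta\ \forall Y\}$ has dimension $\geq 2$ (its multiplicity), $\alpha_f$ the second fundamental form; for a hypersurface this means $\eta=\rho\xi$ with $\rho$ a principal curvature of multiplicity $\geq2$ w.r.t. the unit normal $\xi$. *)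

(* Pointwise (linear-algebraic) model of a hypersurface of the
   unit sphere: at each point p the tangent space is identified isometrically
   with R^n (row vectors, standard inner product) via an orthonormal frame, and
   the second fundamental form is alpha(X,Y) = <A X, Y> xi for the shape
   operator A (symmetric) w.r.t. a unit normal xi.  Normal vectors rho xi are
   represented by the scalar rho. *)
From HB Require Import structures.
From mathcomp Require Import all_boot all_order all_algebra.
Set Implicit Arguments. Unset Strict Implicit. Unset Printing Implicit Defensive.
Import Order.TTheory GRing.Theory Num.Theory.
Local Open Scope ring_scope.

Section Defs.
Variables (R : rcfType) (n : nat).

Definition inner (u v : 'rV[R]_n) : R := (u *m v^T) 0 0.

Definition unit_vec (X : 'rV[R]_n) : Prop := inner X X = 1.

Definition sff (A : 'M[R]_n) (X Y : 'rV[R]_n) : R := inner (X *m A) Y.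

(* Riemann curvature tensor R(X,Y,Z,W) of M, given by the Gauss equation for a
   submanifold of the unit sphere (ambient curvature 1) *)
Definition curv (A : 'M[R]_n) (X Y Z W : 'rV[R]_n) : R :=
  inner X W * inner Y Z - inner X Z * inner Y W
  + sff A X W * sff A Y Z - sff A X Z * sff A Y W.

(* non-normalized Ricci curvature in direction X (orthonormal frame e_i) *)
Definition Ric (A : 'M[R]_n) (X : 'rV[R]_n) : R :=
  \sum_(i < n) curv A (delta_mx 0 i) X X (delta_mx 0 i).

(* length of the normalized mean curvature vector (1/n) tr(alpha) *)
Definition meanH (A : 'M[R]_n) : R := `|\tr A| / n%:R.

Definition subspace_dim (P : 'rV[R]_n -> Prop) (d : nat) : Prop :=
  exists B : 'M[R]_(d, n), row_free B /\ forall x, P x <-> (x <= B)%MS.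

Definition principal (A : 'M[R]_n) (rho : R) (X : 'rV[R]_n) : Prop :=
  X *m A = rho *: X.

Definition dupinE (A : 'M[R]_n) (rho : R) (X : 'rV[R]_n) : Prop :=
  forall Y : 'rV[R]_n, sff A X Y = inner X Y * rho.

Definition minimal_cartan_shape (m : nat) (A : 'M[R]_n) : Prop :=
  A^T = A /\
  subspace_dim (principal A (Num.sqrt 3)) m /\
  subspace_dim (principal A 0) m /\
  subspace_dim (principal A (- Num.sqrt 3)) m.

End Defs.

Definition bnd {R : rcfType} (n k : nat) (H : R) : R :=
  n%:R * (k%:R - 1) / k%:R
  + n%:R * (k%:R - 1) * H / (2 * k%:R ^+ 2)
    * (n%:R * H + Num.sqrt (n%:R ^+ 2 * H ^+ 2 + 4 * k%:R * (n%:R - k%:R))).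

Definition lambda {R : rcfType} (n k : nat) (H : R) : R :=
  (n%:R * H + Num.sqrt (n%:R ^+ 2 * H ^+ 2 + 4 * k%:R * (n%:R - k%:R))) / (2 * k%:R).

From mathcomp Require Import all_boot all_order all_algebra.
From mathcomp Require Import ring lra zify.
Set Implicit Arguments. Unset Strict Implicit. Unset Printing Implicit Defensive.
Import Order.TTheory GRing.Theory Num.Theory.
Local Open Scope ring_scope.

(* At each point the shape operator A of the minimal Cartan hypersurface
   M^(3m) is diagonal with eigenvalues sqrt 3, 0, -sqrt 3, each of
   multiplicity m.  Hence tr A = 0 and |AX|^2 <= 3 |X|^2, so the Gauss
   equation gives Ric(X) = (n - 1) - |AX|^2 >= n - 4 for unit X, with
   equality on the sqrt 3-eigenspace; that eigenspace is exactly the Dupin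
   space E_eta of eta = sqrt 3 xi.  Since b(n,k,0) = n(k-1)/k, the inequality
   Ric >= b(n,k,H) holds iff 4k <= n, and for 4k = n one gets
   b(n,k,0) = n - 4 and lambda(n,k,0) = sqrt 3. *)

Section InnerProduct.
Variables (R : rcfType) (n : nat).
Implicit Types (u v w : 'rV[R]_n).

Lemma innerE u v : inner u v = \sum_j u 0 j * v 0 j.
Proof. by rewrite /inner !mxE; apply: eq_bigr => j _; rewrite mxE. Qed.

Lemma innerC u v : inner u v = inner v u.
Proof. by rewrite !innerE; apply: eq_bigr => j _; rewrite mulrC. Qed.

Lemma innerDl u v w : inner (u + v) w = inner u w + inner v w.
Proof. by rewrite !innerE -big_split; apply: eq_bigr => j _; rewrite mxE mulrDl. Qed.

Lemma innerZl a u v : inner (a *: u) v = a * inner u v.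
Proof. by rewrite !innerE mulr_sumr; apply: eq_bigr => j _; rewrite mxE mulrA. Qed.

Lemma innerDr u v w : inner u (v + w) = inner u v + inner u w.
Proof. by rewrite innerC innerDl !(innerC u). Qed.

Lemma innerZr a u v : inner u (a *: v) = a * inner u v.
Proof. by rewrite innerC innerZl innerC. Qed.

Lemma inner_ge0 v : 0 <= inner v v.
Proof. by rewrite innerE sumr_ge0 // => j _; rewrite -expr2 sqr_ge0. Qed.

Lemma inner_eq0 v : (inner v v == 0) = (v == 0).
Proof.
apply/idP/eqP => [|->]; last by rewrite innerE big1 // => j _; rewrite mxE mul0r.
rewrite innerE psumr_eq0 => [/allP v0|j _]; last by rewrite -expr2 sqr_ge0.
apply/matrixP => i j; rewrite (ord1 i) mxE.
by have /implyP/(_ isT) := v0 j (mem_index_enum j); rewrite mulf_eq0 orbb => /eqP.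
Qed.

Lemma inner_gt0 v : v != 0 -> 0 < inner v v.
Proof. by rewrite lt_def inner_ge0 inner_eq0 andbT. Qed.

Lemma inner_deltar u i : inner u (delta_mx 0 i) = u 0 i.
Proof.
rewrite innerE (bigD1 i) //= big1 => [|j /negbTE ji]; rewrite mxE ?eqxx ?ji /=.
  by rewrite mulr1 addr0.
by rewrite mulr0.
Qed.

Lemma inner_mulmxl u v (M : 'M[R]_n) : inner (u *m M) v = inner u (v *m M^T).
Proof. by rewrite /inner trmx_mul trmxK mulmxA. Qed.

Lemma subspace_dim_unit_vec (P : 'rV[R]_n -> Prop) d :
  (0 < d)%N -> subspace_dim P d -> exists X, P X /\ unit_vec X.
Proof.
move=> d_gt0 [B [freeB PB]].
pose v := row (Ordinal d_gt0) B.
have v_neq0 : v != 0.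
  apply: contraTneq freeB => v0; apply/row_freePn; exists (Ordinal d_gt0).
  by rewrite -/v v0 sub0mx.
have vv_gt0 := inner_gt0 v_neq0.
set c := Num.sqrt (inner v v).
have c_neq0 : c != 0 by rewrite gt_eqF ?sqrtr_gt0.
have cc : c * c = inner v v by rewrite -expr2 sqr_sqrtr // ltW.
exists (c^-1 *: v); split; first by apply/PB; rewrite scalemx_sub ?row_sub.
by rewrite /unit_vec innerZl innerZr -cc; field.
Qed.

End InnerProduct.

Section ShapeOperator.
Variables (R : rcfType) (n : nat) (A : 'M[R]_n).

Lemma dupinE_principal rho X : dupinE A rho X <-> principal A rho X.
Proof.
split => [EX|AX Y]; last by rewrite /sff AX innerZl mulrC.
apply/matrixP => i j; rewrite (ord1 i) [RHS]mxE.
by have := EX (delta_mx 0 j); rewrite /sff !inner_deltar mulrC.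
Qed.

Lemma principal_mulmx a m (B : 'M[R]_(m, n)) :
  (forall x, principal A a x <-> (x <= B)%MS) -> forall w, principal A a (w *m B).
Proof. by move=> eB w; apply/eB; exact: submxMl. Qed.

Lemma eigenbasis_mulmx a m (B : 'M[R]_(m, n)) :
  (forall x, principal A a x <-> (x <= B)%MS) -> B *m A = a *: B.
Proof.
move=> eB; apply/eigenspaceP; apply/row_subP => i; apply/eigenspaceP.
by apply/eB; exact: row_sub.
Qed.

Hypothesis symA : A^T = A.

Lemma Ric_symmetric X :
  Ric A X = n%:R * inner X X - inner X X + \tr A * sff A X X
            - inner (X *m A) (X *m A).
Proof.
rewrite /Ric /curv /sff.
under eq_bigr => i _ do rewrite (innerC (delta_mx 0 i) X)
  (inner_mulmxl (delta_mx 0 i) X) symA (innerC (delta_mx 0 i) (X *m A))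
  !inner_deltar -rowE !mxE eqxx /=.
rewrite !sumrB !big_split /= sumrN.
under eq_bigr do rewrite eqxx mul1r.
rewrite sumr_const card_ord -mulr_suml /mxtrace.
rewrite (innerE X X) (innerE (X *m A) (X *m A)) mulr_natl; congr (_ - _).
by apply: eq_bigr => i _; rewrite !mxE.
Qed.

Lemma principal_orthogonal a b x y : a != b ->
  principal A a x -> principal A b y -> inner x y = 0.
Proof.
move=> neq_ab Ax Ay.
have : a * inner x y = b * inner x y.
  by rewrite -innerZl -Ax inner_mulmxl symA Ay innerZr.
by move/eqP; rewrite -subr_eq0 -mulrBl mulf_eq0 subr_eq0 (negbTE neq_ab) => /eqP.
Qed.

End ShapeOperator.

Section ThreeEigenspaces.
Variables (R : rcfType) (m1 m2 m3 : nat).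
Local Notation n := (m1 + (m2 + m3))%N.
Variables (A : 'M[R]_n) (a b c : R).
Variables (B1 : 'M[R]_(m1, n)) (B2 : 'M[R]_(m2, n)) (B3 : 'M[R]_(m3, n)).
Hypotheses (symA : A^T = A) (neq_ab : a != b) (neq_ac : a != c) (neq_bc : b != c).
Hypotheses (freeB1 : row_free B1) (freeB2 : row_free B2) (freeB3 : row_free B3).
Hypotheses (eigB1 : forall x, principal A a x <-> (x <= B1)%MS)
           (eigB2 : forall x, principal A b x <-> (x <= B2)%MS)
           (eigB3 : forall x, principal A c x <-> (x <= B3)%MS).

Local Notation P := (col_mx B1 (col_mx B2 B3)).

Lemma eigenbasis_unitmx : P \in unitmx.
Proof.
have cap23 : (B2 :&: B3)%MS = 0.
  apply/eqP/rowV0P => v; rewrite sub_capmx => /andP[/eigB2 v2 /eigB3 v3].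
  by apply/eqP; rewrite -inner_eq0 (principal_orthogonal symA neq_bc v2 v3).
have cap1 : (B1 :&: col_mx B2 B3)%MS = 0.
  apply/eqP/rowV0P => v; rewrite sub_capmx => /andP[/eigB1 v1 /submxP[w def_v]].
  apply/eqP; rewrite -inner_eq0 {2}def_v -(hsubmxK w) mul_row_col innerDr.
  rewrite (principal_orthogonal symA neq_ab v1 (principal_mulmx eigB2 _)).
  by rewrite (principal_orthogonal symA neq_ac v1 (principal_mulmx eigB3 _)) addr0.
have rank23 : \rank (col_mx B2 B3) = (m2 + m3)%N.
  rewrite -(addsmxE B2 B3).1.
  have := mxrank_sum_cap B2 B3; rewrite cap23 mxrank0 addn0 => ->.
  by rewrite (eqP freeB2) (eqP freeB3).
rewrite -row_free_unit /row_free -(addsmxE B1 (col_mx B2 B3)).1.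
have := mxrank_sum_cap B1 (col_mx B2 B3); rewrite cap1 mxrank0 addn0 => ->.
by rewrite rank23 (eqP freeB1).
Qed.

Lemma mxtrace_eigenbasis : \tr A = a *+ m1 + b *+ m2 + c *+ m3.
Proof.
pose D : 'M[R]_n := block_mx a%:M 0 0 (block_mx b%:M 0 0 c%:M).
have PA : P *m A = D *m P.
  rewrite !mul_col_mx (eigenbasis_mulmx eigB1) (eigenbasis_mulmx eigB2).
  rewrite (eigenbasis_mulmx eigB3) /D.
  by rewrite !(mul_row_col, mul_col_mx, mul0mx, mul_scalar_mx, addr0, add0r).
have -> : A = invmx P *m (D *m P) by rewrite -PA mulKmx ?eigenbasis_unitmx.
rewrite mxtrace_mulC -mulmxA mulmxV ?eigenbasis_unitmx // mulmx1 /D.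
by rewrite !mxtrace_block !mxtrace_scalar addrA.
Qed.

Lemma inner_eigen_decomposition X : exists x1 x2 x3 : R,
  [/\ 0 <= x1, 0 <= x2, 0 <= x3, inner X X = x1 + x2 + x3
    & inner (X *m A) (X *m A) = a ^+ 2 * x1 + b ^+ 2 * x2 + c ^+ 2 * x3].
Proof.
have eX : X = X *m invmx P *m P by rewrite mulmxKV ?eigenbasis_unitmx.
move: eX; set w := X *m invmx P.
rewrite -(hsubmxK w) -(hsubmxK (rsubmx w)) !mul_row_col.
set X1 := _ *m B1; set X2 := _ *m B2; set X3 := _ *m B3 => eX.
have A1 : principal A a X1 by exact: principal_mulmx.
have A2 : principal A b X2 by exact: principal_mulmx.
have A3 : principal A c X3 by exact: principal_mulmx.
have o12 := principal_orthogonal symA neq_ab A1 A2.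
have o13 := principal_orthogonal symA neq_ac A1 A3.
have o23 := principal_orthogonal symA neq_bc A2 A3.
have o21 : inner X2 X1 = 0 by rewrite innerC.
have o31 : inner X3 X1 = 0 by rewrite innerC.
have o32 : inner X3 X2 = 0 by rewrite innerC.
exists (inner X1 X1), (inner X2 X2), (inner X3 X3); split; rewrite ?inner_ge0 //.
  rewrite eX !(innerDl, innerDr) o12 o13 o23 o21 o31 o32; ring.
rewrite eX !mulmxDl A1 A2 A3 !(innerDl, innerDr, innerZl, innerZr).
rewrite o12 o13 o23 o21 o31 o32; ring.
Qed.

End ThreeEigenspaces.

Section MinimalCartan.
Variables (R : rcfType) (m : nat).
Local Notation n := (m + (m + m))%N.
Local Notation s := (Num.sqrt (3 : R)).
Variables (A : 'M[R]_n) (cartanA : minimal_cartan_shape m A).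

Let symA : A^T = A. Proof. by case: cartanA. Qed.

Let s_neq0 : s != 0. Proof. by rewrite gt_eqF // sqrtr_gt0 ltr0n. Qed.

Let sqr_s : s ^+ 2 = 3. Proof. by rewrite sqr_sqrtr // ler0n. Qed.

Let s_neqN : s != - s.
Proof. by rewrite -subr_eq0 opprK -mulr2n mulrn_eq0 negb_or s_neq0. Qed.

Let zero_neqN : 0 != - s. Proof. by rewrite eq_sym oppr_eq0. Qed.

Lemma minimal_cartan_trace : \tr A = 0.
Proof.
have [_ [[B1 [f1 e1]] [[B2 [f2 e2]] [B3 [f3 e3]]]]] := cartanA.
rewrite (mxtrace_eigenbasis symA s_neq0 s_neqN zero_neqN f1 f2 f3 e1 e2 e3).
by rewrite mul0rn addr0 mulNrn subrr.
Qed.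

Lemma minimal_cartan_meanH : meanH A = 0.
Proof. by rewrite /meanH minimal_cartan_trace normr0 mul0r. Qed.

Lemma minimal_cartan_inner_le X : inner (X *m A) (X *m A) <= 3 * inner X X.
Proof.
have [_ [[B1 [f1 e1]] [[B2 [f2 e2]] [B3 [f3 e3]]]]] := cartanA.
have [x1 [x2 [x3 [x1_ge0 x2_ge0 x3_ge0 -> ->]]]] :=
  inner_eigen_decomposition symA s_neq0 s_neqN zero_neqN f1 f2 f3 e1 e2 e3 X.
rewrite sqrrN sqr_s expr0n /=; lra.
Qed.

Lemma minimal_cartan_Ric X : unit_vec X ->
  Ric A X = n%:R - 1 - inner (X *m A) (X *m A).
Proof.
by move=> uX; rewrite Ric_symmetric // minimal_cartan_trace mul0r addr0 uX mulr1.
Qed.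

Lemma minimal_cartan_Ric_ge X : unit_vec X -> n%:R - 4 <= Ric A X.
Proof.
move=> uX; rewrite minimal_cartan_Ric //.
have := minimal_cartan_inner_le X; rewrite uX; lra.
Qed.

Lemma minimal_cartan_Ric_principal X : principal A s X -> unit_vec X ->
  Ric A X = n%:R - 4.
Proof.
move=> AX uX; rewrite minimal_cartan_Ric // AX innerZl innerZr uX mulr1.
rewrite -expr2 sqr_s; ring.
Qed.

End MinimalCartan.

Lemma bnd0 (R : rcfType) n k : bnd n k (0 : R) = n%:R * (k%:R - 1) / k%:R.
Proof. by rewrite /bnd !mulr0 !mul0r addr0. Qed.

Lemma bnd0_le (R : rcfType) n k : (0 < k)%N ->
  (bnd n k (0 : R) <= n%:R - 4) = (4 * k <= n)%N.
Proof.
move=> k_gt0; have kR_gt0 : 0 < k%:R :> R by rewrite ltr0n.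
rewrite bnd0 ler_pdivrMr // -(ler_nat R) natrM.
by apply/idP/idP => h; nra.
Qed.

Lemma bnd0_eq (R : rcfType) n k : (0 < k)%N -> n = (4 * k)%N ->
  bnd n k (0 : R) = n%:R - 4.
Proof. by move=> k_gt0 ->; rewrite bnd0 natrM; field; rewrite pnatr_eq0 -lt0n. Qed.

Lemma lambda0_eq (R : rcfType) n k : (0 < k)%N -> n = (4 * k)%N ->
  lambda n k (0 : R) = Num.sqrt 3.
Proof.
move=> k_gt0 ->; have kR_gt0 : 0 < k%:R :> R by rewrite ltr0n.
rewrite /lambda !mulr0 expr0n /= mulr0 !add0r.
rewrite [X in Num.sqrt X](_ : _ = (2 * k%:R) ^+ 2 * 3); last by rewrite natrM; ring.
rewrite sqrtrM ?sqr_ge0 // sqrtr_sqr ger0_norm ?mulr_ge0 ?ltW // mulrC mulKf //.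
by rewrite mulf_neq0 ?gt_eqF.
Qed.

Theorem minimal_cartan_Ric_pinching (R : rcfType) (m k : nat) (M : Type)
    (A : M -> 'M[R]_(m + (m + m))) :
  (0 < k)%N -> (4 * k = 3 * m)%N ->
  inhabited M -> (forall p, minimal_cartan_shape m (A p)) ->
  (forall k', (2 <= k' <= m + (m + m))%N ->
     ((forall p X, unit_vec X -> bnd (m + (m + m)) k' (meanH (A p)) <= Ric (A p) X)
      <-> (k' <= k)%N))
  /\ (exists p X, unit_vec X /\ Ric (A p) X = bnd (m + (m + m)) k (meanH (A p)))
  /\ lambda (m + (m + m)) k (0 : R) = Num.sqrt 3
  /\ (forall p, subspace_dim (principal (A p) (lambda (m + (m + m)) k 0)) m)
  /\ (forall p, exists rho : R,
        subspace_dim (dupinE (A p) rho) m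
        /\ `|rho| = lambda (m + (m + m)) k 0
        /\ (forall X, dupinE (A p) rho X -> unit_vec X ->
              Ric (A p) X = bnd (m + (m + m)) k 0)).
Proof.
move=> k_gt0 km [p0] cartanA; set n := (m + (m + m))%N.
have n4k : n = (4 * k)%N by rewrite /n; lia.
have eigen_dim p := (cartanA p).2.1.
have [X0 [AX0 uX0]] := subspace_dim_unit_vec (ltac:(lia) : (0 < m)%N) (eigen_dim p0).
rewrite (lambda0_eq _ k_gt0 n4k) (bnd0_eq _ k_gt0 n4k).
split.
  move=> k' /andP[k'_ge2 _]; rewrite -(leq_pmul2l (isT : (0 < 4)%N)) -n4k.
  rewrite -(bnd0_le R n (ltnW k'_ge2)); split => [|bnd_le p X uX].
    by move/(_ p0 X0 uX0); rewrite minimal_cartan_meanH ?minimal_cartan_Ric_principal.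
  rewrite minimal_cartan_meanH //; apply: le_trans bnd_le _.
  exact: minimal_cartan_Ric_ge.
split.
  exists p0, X0; rewrite minimal_cartan_meanH ?(bnd0_eq _ k_gt0 n4k) //.
  by rewrite minimal_cartan_Ric_principal.
split=> //; split=> // p; exists (Num.sqrt 3); split.
  have [B [freeB eB]] := eigen_dim p; exists B; split => // x.
  exact: iff_trans (dupinE_principal _ _ _) (eB x).
split; first by rewrite ger0_norm // sqrtr_ge0.
by move=> X /dupinE_principal AX uX; rewrite minimal_cartan_Ric_principal.
Qed.

Theorem proposition9 :
  (forall (R : rcfType) (M : Type) (A : M -> 'M[R]_12),
     inhabited M ->
     (forall p, minimal_cartan_shape 4 (A p)) ->
     (forall k : nat, (2 <= k <= 12)%N ->
        ((forall p X, unit_vec X -> bnd 12 k (meanH (A p)) <= Ric (A p) X)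
         <-> (k <= 3)%N))
     /\ (exists p X, unit_vec X /\ Ric (A p) X = bnd 12 3 (meanH (A p)))
     /\ lambda 12 3 (0 : R) = Num.sqrt 3
     /\ (forall p, subspace_dim (principal (A p) (lambda 12 3 0)) 4)
     /\ (forall p, exists rho : R,
           subspace_dim (dupinE (A p) rho) 4
           /\ `|rho| = lambda 12 3 0
           /\ (forall X, dupinE (A p) rho X -> unit_vec X ->
                 Ric (A p) X = bnd 12 3 0)))
  /\
  (forall (R : rcfType) (M : Type) (A : M -> 'M[R]_24),
     inhabited M ->
     (forall p, minimal_cartan_shape 8 (A p)) ->
     (forall k : nat, (2 <= k <= 24)%N ->
        ((forall p X, unit_vec X -> bnd 24 k (meanH (A p)) <= Ric (A p) X)
         <-> (k <= 6)%N))
     /\ (exists p X, unit_vec X /\ Ric (A p) X = bnd 24 6 (meanH (A p)))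
     /\ lambda 24 6 (0 : R) = Num.sqrt 3
     /\ (forall p, subspace_dim (principal (A p) (lambda 24 6 0)) 8)
     /\ (forall p, exists rho : R,
           subspace_dim (dupinE (A p) rho) 8
           /\ `|rho| = lambda 24 6 0
           /\ (forall X, dupinE (A p) rho X -> unit_vec X ->
                 Ric (A p) X = bnd 24 6 0))).
Proof.
split=> R M A.
- exact: (@minimal_cartan_Ric_pinching R 4 3 M A).
- exact: (@minimal_cartan_Ric_pinching R 8 6 M A).
Qed.
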